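(* Let $(\Omega,\mathcal{F},P,T)$ be a measure preserving system. The following are equivalent: (i) $P$ is weakly mixing; (ii) for every $r>0$, $\lim_{n\to\infty}\frac{1}{n}\sum_{i=0}^{n-1}P^r(B\cap T^{-i}C)=P^r(B)P^r(C)$ for all $B,C\in\mathcal{F}$; (iii) for all $B,C\in\mathcal{F}$, $\lim_{n\to\infty}\frac{1}{n}\sum_{i=0}^{n-1}P(B\cap T^{-i}C)=P(B)P(C)$, and there exists $r=r_{B,C}\in(0,1/2]$ such that $\lim_{n\to\infty}\frac{1}{n}\sum_{i=0}^{n-1}P^r(B\cap T^{-i}C)=P^r(B)P^r(C)$. In particular, $P$ is weakly mixing if and only if $P$ is ergodic and $\lim_{n\to\infty}\frac{1}{n}\sum_{i=0}^{n-1}P^{1/2}(B\cap T^{-i}C)=P^{1/2}(B)P^{1/2}(C)$ for all $B,C\in\mathcal{F}$.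
   Context: A measure preserving system $(\Omega,\mathcal{F},P,T)$ consists of a probability space and a measurable $T:\Omega\to\Omega$ with $P(T^{-1}A)=P(A)$ for all $A\in\mathcal{F}$. $P^r(A)$ denotes $(P(A))^r$. $P$ is ergodic if $P(A)\in\{0,1\}$ whenever $T^{-1}A=A$; weakly mixing if $P\times P$ is ergodic for $T\times T$. *)

From HB Require Import structures.
From mathcomp Require Import all_boot all_order all_algebra.
From mathcomp Require Import all_classical all_reals all_analysis.
Set Implicit Arguments. Unset Strict Implicit. Unset Printing Implicit Defensive.
Import Order.TTheory GRing.Theory Num.Theory.
Import numFieldNormedType.Exports.
Local Open Scope classical_set_scope.
Local Open Scope ring_scope.

Definition measure_preserving {d} {T : measurableType d} {R : realType}
  (P : set T -> \bar R) (f : T -> T) : Prop :=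
  measurable_fun setT f /\
  forall A : set T, measurable A -> P (f @^-1` A) = P A.

Definition ergodic {d} {T : measurableType d} {R : realType}
  (P : set T -> \bar R) (f : T -> T) : Prop :=
  forall A : set T, measurable A -> f @^-1` A = A ->
    P A = 0%E \/ P A = 1%E.

Definition weakly_mixing {d} {T : measurableType d} {R : realType}
  (P : set T -> \bar R) (f : T -> T) : Prop :=
  ergodic (P \x P)%E (fun xy : T * T => (f xy.1, f xy.2)).

(* (1/n) sum_{i<n} P^r(B ∩ T^{-i} C) ; P is finite so we take its real value *)
Definition avg_pow {d} {T : measurableType d} {R : realType}
  (P : set T -> \bar R) (f : T -> T) (r : R) (B C : set T) (n : nat) : R :=
  n%:R^-1 * \sum_(i < n) (fine (P (B `&` (iter i f) @^-1` C))) `^ r.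

Definition avg {d} {T : measurableType d} {R : realType}
  (P : set T -> \bar R) (f : T -> T) (B C : set T) (n : nat) : R :=
  n%:R^-1 * \sum_(i < n) fine (P (B `&` (iter i f) @^-1` C)).

From HB Require Import structures.
From mathcomp Require Import all_boot all_order all_algebra.
From mathcomp Require Import all_classical all_reals all_analysis.
From mathcomp Require Import ring lra measurable_realfun.
Import Order.TTheory GRing.Theory Num.Theory.
Import numFieldNormedType.Exports.
Local Open Scope classical_set_scope.
Local Open Scope ring_scope.

Set Implicit Arguments. Unset Strict Implicit. Unset Printing Implicit Defensive.

(* Write a_i = P(B ∩ T^-i C) and c = P(B) P(C).  The mean ergodic theorem for sets is
   proved from ergodicity: for t > P(C) the set of points whose Birkhoff sums of 1_C
   exceed n t by arbitrarily much is invariant, and it cannot be of full measure by a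
   covering argument along orbits.  If T is weakly mixing, T x T is ergodic, so the
   theorem applied to T and to B x B, C x C under T x T gives Cesaro means of a_i and
   a_i^2 tending to c and c^2; hence a_i -> c in density, and so does any continuous
   function of a_i, in particular a_i^r.  Conversely, for r <= 1/2 the function
   x |-> x^(2r) is concave, and its tangent line at c together with (iii) makes the
   Cesaro means of (a_i^r - c^r)^2 tend to 0, so again a_i -> c in density.  Products
   of sequences converging in density converge in density, which gives the mixing
   averages of T x T on rectangles, then on all product-measurable sets by a pi-lambda
   argument; for a T x T-invariant set E this forces P(E) = P(E)^2. *)

Local Notation pr mu A := (fine (mu A)).

(** * Cesaro means and convergence in density *)

Section cesaro_mean.
Variable R : realType.
Implicit Types (x y : R^nat) (c e : R).

Lemma cvgn_distP (u : R^nat) (l : R) : u @ \oo --> l <->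
  forall e : R, 0 < e -> exists N, forall n, (N <= n)%N -> `|u n - l| <= e.
Proof.
split=> [/cvgrPdist_le H e e0 | H].
  by have [N _ HN] := H e e0; exists N => n Nn; rewrite distrC; apply: HN.
apply/cvgrPdist_le => e e0; have [N HN] := H e e0.
by exists N => // n /= Nn; rewrite distrC; apply: HN.
Qed.

Lemma cvg_unif_approx (u : R^nat) (l : R) :
  (forall e : R, 0 < e -> exists (v : R^nat) (k : R),
     [/\ v @ \oo --> k, `|k - l| <= e & forall n, `|u n - v n| <= e]) ->
  u @ \oo --> l.
Proof.
move=> H; apply/cvgn_distP => e e0.
have e3 : 0 < e / 3 by rewrite divr_gt0.
have [v [k [/cvgn_distP hv hk huv]]] := H _ e3.
have [N HN] := hv _ e3; exists N => n Nn.
have := HN n Nn; have := huv n.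
have : `|u n - l| <= `|u n - v n| + `|v n - k| + `|k - l|.
  rewrite (_ : u n - l = (u n - v n) + (v n - k) + (k - l)); last by ring.
  by apply: le_trans (ler_normD _ _) _; rewrite lerD2r ler_normD.
lra.
Qed.

Definition mean x (n : nat) : R := n%:R^-1 * \sum_(i < n) x i.

Lemma meanD x y n : mean (fun i => x i + y i) n = mean x n + mean y n.
Proof. by rewrite /mean big_split /= mulrDr. Qed.

Lemma meanZ c x n : mean (fun i => c * x i) n = c * mean x n.
Proof. by rewrite /mean -mulr_sumr mulrCA. Qed.

Lemma meanB x y n : mean (fun i => x i - y i) n = mean x n - mean y n.
Proof. by rewrite meanD /mean sumrN mulrN. Qed.

Lemma mean_cst c n : (0 < n)%N -> mean (fun=> c) n = c.
Proof.
move=> n0; rewrite /mean sumr_const card_ord -(mulr_natl c) mulrA mulVf ?mul1r //.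
by rewrite pnatr_eq0 -lt0n.
Qed.

Lemma ler_mean x y n : (forall i, x i <= y i) -> mean x n <= mean y n.
Proof.
by move=> xy; rewrite /mean ler_wpM2l ?invr_ge0 ?ler0n // ler_sum.
Qed.

Lemma mean_ge0 x n : (forall i, 0 <= x i) -> 0 <= mean x n.
Proof. by move=> x0; rewrite /mean mulr_ge0 ?invr_ge0 ?ler0n ?sumr_ge0. Qed.

Lemma ler_norm_mean x n : `|mean x n| <= mean (fun i => `|x i|) n.
Proof.
rewrite /mean normrM ger0_norm ?invr_ge0 ?ler0n //.
by rewrite ler_wpM2l ?invr_ge0 ?ler0n // ler_norm_sum.
Qed.

Lemma norm_mean_le x c n : 0 <= c -> (forall i, `|x i| <= c) -> `|mean x n| <= c.
Proof.
move=> c0 xc; apply: le_trans (ler_norm_mean _ _) _.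
case: n => [|n]; first by rewrite /mean big_ord0 mulr0.
by rewrite -(mean_cst c (ltn0Sn n)) ler_mean.
Qed.

Lemma mean_sqr_dev x c n : (0 < n)%N ->
  mean (fun i => (x i - c) ^+ 2) n =
  mean (fun i => x i ^+ 2) n - 2 * c * mean x n + c ^+ 2.
Proof.
move=> n0.
have -> : (fun i => (x i - c) ^+ 2) = (fun i => x i ^+ 2 + (- (2 * c)) * x i + c ^+ 2).
  by apply/funext => i; rewrite sqrrB; ring.
by rewrite !meanD meanZ mean_cst //; ring.
Qed.

Lemma mean_sqr_dev_cvg0 x c : mean x @ \oo --> c ->
  mean (fun i => x i ^+ 2) @ \oo --> c ^+ 2 ->
  mean (fun i => (x i - c) ^+ 2) @ \oo --> 0.
Proof.
move=> hx hx2.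
have -> : (0 : R) = c ^+ 2 - 2 * c * c + c ^+ 2 by ring.
have lim : (fun n => mean (fun i => x i ^+ 2) n - 2 * c * mean x n + c ^+ 2) @ \oo -->
    c ^+ 2 - 2 * c * c + c ^+ 2.
  by apply: cvgD; [apply: cvgB => //; apply: cvgMr | apply: cvg_cst].
apply: cvg_trans lim.
by apply: near_eq_cvg; near=> n; rewrite mean_sqr_dev //; near: n; exists 1%N.
Unshelve. all: end_near.
Qed.

(* For bounded sequences this is convergence in density (Koopman-von Neumann):
   x_i -> c outside a set of indices of zero density. *)
Definition strongly_cesaro x c := mean (fun i => `|x i - c|) @ \oo --> 0.

Lemma strongly_cesaro_sqr x c :
  mean (fun i => (x i - c) ^+ 2) @ \oo --> 0 -> strongly_cesaro x c.
Proof.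
move=> /cvgn_distP H; apply/cvgn_distP => e e0.
have e2 : 0 < e / 2 by rewrite divr_gt0.
have [N HN] := H ((e / 2) ^+ 2) (exprn_gt0 _ e2).
exists (maxn N 1) => n; rewrite geq_max => /andP[Nn n1].
have dev0 : 0 <= mean (fun i => (x i - c) ^+ 2) n by apply: mean_ge0 => i; apply: sqr_ge0.
have := HN n Nn; rewrite subr0 ger0_norm // => hdev.
have amgm (d u : R) : 0 < d -> `|u| <= d + d^-1 * u ^+ 2.
  move=> d0; rewrite -(@ler_pM2l _ d) // mulrDr mulrA mulfV ?gt_eqF // mul1r.
  by rewrite -real_normK ?num_real //; have := normr_ge0 u; nra.
have := @ler_mean (fun i => `|x i - c|) (fun i => e / 2 + (e / 2)^-1 * (x i - c) ^+ 2) n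
  (fun i => amgm _ _ e2).
rewrite meanD (meanZ (e / 2)^-1) mean_cst // subr0 ger0_norm; last by apply: mean_ge0.
have : (e / 2)^-1 * mean (fun i => (x i - c) ^+ 2) n <= e / 2.
  by rewrite ler_pdivrMl // -expr2.
lra.
Qed.

Lemma strongly_cesaro_comp x (g : R -> R) c :
  (forall i, 0 <= x i <= 1) ->
  (forall e : R, 0 < e -> exists M : R, 0 < M /\
     forall y : R, 0 <= y <= 1 -> `|g y - g c| <= e + M * `|y - c|) ->
  strongly_cesaro x c -> mean (fun i => g (x i)) @ \oo --> g c.
Proof.
move=> x01 hg /cvgn_distP H; apply/cvgn_distP => e e0.
have e2 : 0 < e / 2 by rewrite divr_gt0.
have [M [M0 HM]] := hg _ e2.
have [N HN] := H (e / 2 / M) (divr_gt0 e2 M0).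
exists (maxn N 1) => n; rewrite geq_max => /andP[Nn n1].
have := HN n Nn; rewrite subr0 ger0_norm; last by apply: mean_ge0.
move=> hdev; rewrite -(mean_cst (g c) n1) -meanB.
apply: le_trans (ler_norm_mean _ _) _.
have := @ler_mean (fun i => `|g (x i) - g c|) (fun i => e / 2 + M * `|x i - c|) n.
rewrite meanD (meanZ M) mean_cst // => /(_ (fun i => HM _ (x01 i))).
have : M * mean (fun i => `|x i - c|) n <= e / 2 by rewrite -ler_pdivlMl // mulrC.
lra.
Qed.

Lemma strongly_cesaro_mul x y a b : (forall i, `|y i| <= 1) -> `|a| <= 1 ->
  strongly_cesaro x a -> strongly_cesaro y b ->
  mean (fun i => x i * y i) @ \oo --> a * b.
Proof.
move=> y1 a1 /cvgn_distP Hx /cvgn_distP Hy; apply/cvgn_distP => e e0.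
have e2 : 0 < e / 2 by rewrite divr_gt0.
have [N1 HN1] := Hx _ e2; have [N2 HN2] := Hy _ e2.
exists (maxn (maxn N1 N2) 1) => n; rewrite !geq_max => /andP[/andP[n1 n2] n0].
have := HN1 n n1; rewrite subr0 ger0_norm; last by apply: mean_ge0.
have := HN2 n n2; rewrite subr0 ger0_norm; last by apply: mean_ge0.
move=> hy hx; rewrite -(mean_cst (a * b) n0) -meanB.
apply: le_trans (ler_norm_mean _ _) _.
have : mean (fun i => `|x i * y i - a * b|) n <=
    mean (fun i => `|x i - a|) n + mean (fun i => `|y i - b|) n.
  rewrite -meanD; apply: ler_mean => i.
  have -> : x i * y i - a * b = (x i - a) * y i + a * (y i - b) by ring.
  apply: le_trans (ler_normD _ _) _; rewrite !normrM.
  by apply: lerD; [rewrite -[leRHS]mulr1 ler_wpM2l | rewrite -[leRHS]mul1r ler_wpM2r].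
lra.
Qed.

End cesaro_mean.

Section powR_mean.
Variable R : realType.
Implicit Types (x : R^nat) (c r y : R).

Lemma powR_le1 y r : 0 <= y <= 1 -> 0 < r -> y `^ r <= 1.
Proof.
move=> /andP[y0 y1] r0; have [<-|y0'] := eqVneq 0 y; first by rewrite powR0 ?gt_eqF.
have := @ge0_ler_powR R r (ltW r0) y; rewrite !nnegrE => /(_ 1 y0 ler01 y1).
by rewrite powR1.
Qed.

Lemma powR_dist_lt r c : 0 < r -> 0 <= c -> forall e : R, 0 < e ->
  exists d : R, 0 < d /\ forall y, 0 <= y -> `|y - c| < d -> `|y `^ r - c `^ r| < e.
Proof.
move=> r0; rewrite le_eqVlt => /predU1P[<-|c0] e e0.
  have /cvgrPdist_lt /(_ e e0) := @powR_cvg0 R r r0.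
  rewrite /at_right /within => /nbhs_normP [d d0 Hd].
  exists d; split => // y; rewrite le_eqVlt => /predU1P[<- _|y0 yd].
    by rewrite powR0 ?gt_eqF // subr0 normr0.
  rewrite subr0 in yd; rewrite powR0 ?gt_eqF //.
  by have := Hd y; rewrite /= sub0r normrN => /(_ yd y0); rewrite sub0r normrN subr0.
have hd : derivable (fun y : R => y `^ r) c 1.
  by apply: (@derivable_powR R); rewrite in_itv /= c0.
have /cvgrPdist_lt /(_ e e0) /nbhs_normP [d d0 Hd] :=
  differentiable_continuous (proj1 (derivable1_diffP _ _) hd).
exists d; split => // y y0 yd.
by have := Hd y; rewrite /= distrC => /(_ yd); rewrite distrC.
Qed.

Lemma powR_modulus r c : 0 < r -> 0 <= c <= 1 -> forall e : R, 0 < e ->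
  exists M : R, 0 < M /\ forall y, 0 <= y <= 1 -> `|y `^ r - c `^ r| <= e + M * `|y - c|.
Proof.
move=> r0 /andP[c0 c1] e e0.
have [d [d0 Hd]] := powR_dist_lt r0 c0 e0.
exists d^-1; split => [|y /andP[y0 y1]]; first by rewrite invr_gt0.
have [yd|yd] := ltP `|y - c| d.
  have := Hd y y0 yd; have := normr_ge0 (y - c); have : 0 < d^-1 by rewrite invr_gt0.
  move=> *; nra.
have : 1 <= d^-1 * `|y - c| by rewrite ler_pdivlMl // mulr1.
have : `|y `^ r - c `^ r| <= 1.
  have := powR_ge0 y r; have := powR_ge0 c r.
  have := @powR_le1 y r; have := @powR_le1 c r.
  rewrite y0 y1 c0 c1 /= => /(_ isT r0) h1 /(_ isT r0) h2 *.
  by rewrite ler_norml; lra.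
lra.
Qed.

Lemma powR_le_tangent s c y : 0 < s <= 1 -> 0 < c -> 0 <= y ->
  y `^ s <= c `^ (s - 1) * (s * y + (1 - s) * c).
Proof.
move=> /andP[s0 s1] c0 y0.
have [->|s1'] := eqVneq s 1.
  by rewrite subrr powRr0 !mul1r mul0r addr0 powRr1.
have q0 : 0 < 1 - s by rewrite subr_gt0 lt_neqAle s1' s1.
have hpq : s^-1^-1 + (1 - s)^-1^-1 = 1 by rewrite !invrK addrC subrK.
(* Young's inequality for y ^ s and c ^ (1 - s) with exponents 1/s and 1/(1 - s) *)
have := @conjugate_powR R (y `^ s) (c `^ (1 - s)) s^-1 (1 - s)^-1
  (powR_ge0 _ _) (powR_ge0 _ _) _ _ hpq.
rewrite !invr_gt0 s0 q0 => /(_ isT isT).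
rewrite !invrK -!powRrM !mulfV ?gt_eqF // !powRr1 ?(ltW c0) // => young.
have cpos : 0 < c `^ (s - 1) by apply: powR_gt0.
have -> : y `^ s = c `^ (s - 1) * (y `^ s * c `^ (1 - s)).
  rewrite mulrCA -powRD; last by rewrite (gt_eqF c0) implybT.
  by rewrite (_ : s - 1 + (1 - s) = 0) ?powRr0 ?mulr1 //; ring.
by rewrite ler_pM2l //; lra.
Qed.

Lemma mean_powR_cvg x c r : (forall i, 0 <= x i <= 1) -> 0 <= c <= 1 -> 0 < r ->
  strongly_cesaro x c -> mean (fun i => x i `^ r) @ \oo --> c `^ r.
Proof.
move=> x01 c01 r0 hx; apply: (@strongly_cesaro_comp _ x (fun y => y `^ r) c x01 _ hx).
by move=> e; apply: powR_modulus.
Qed.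

Lemma mean_sqr_powR_dev_cvg0 x c r : (forall i, 0 <= x i <= 1) -> 0 < c ->
  0 < r -> r <= 2^-1 ->
  mean x @ \oo --> c -> mean (fun i => x i `^ r) @ \oo --> c `^ r ->
  mean (fun i => (x i `^ r - c `^ r) ^+ 2) @ \oo --> 0.
Proof.
move=> x01 c0 r0 rh hx hxr.
set s := r * 2; set t := c `^ r.
have s01 : 0 < s <= 1 by rewrite mulr_gt0 //= -ler_pdivlMr // div1r.
have sqr_powR y : 0 <= y -> (y `^ r) ^+ 2 = y `^ s.
  by move=> y0; rewrite /s powRrM -[2]/(2%:R) powR_mulrn // powR_ge0.
(* [w n] bounds the mean square deviation, using the tangent of y |-> y ^ s at c *)
pose w n := c `^ (s - 1) * (s * mean x n + (1 - s) * c)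
  - 2 * t * mean (fun i => x i `^ r) n + t ^+ 2.
have hw : w @ \oo --> 0.
  have -> : 0 = c `^ (s - 1) * (s * c + (1 - s) * c) - 2 * t * t + t ^+ 2.
    rewrite (_ : s * c + (1 - s) * c = c); last by ring.
    by rewrite mulrC mulr_powRB1 ?ltW ?(andP s01).1 // -sqr_powR ?ltW // -/t; ring.
  apply: cvgD; last exact: cvg_cst.
  apply: cvgB; last exact: cvgMr.
  by apply: cvgMr; apply: cvgD; [apply: cvgMr | apply: cvg_cst].
apply: (squeeze_cvgr _ (cvg_cst 0) hw); near=> n.
rewrite mean_ge0 /=; last by move=> i; apply: sqr_ge0.
rewrite mean_sqr_dev; last by near: n; exists 1%N.
rewrite /w !lerD2r; under eq_fun do rewrite sqr_powR ?(andP (x01 _)).1 //.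
have := @ler_mean _ (fun i => x i `^ s)
  (fun i => c `^ (s - 1) * (s * x i) + c `^ (s - 1) * ((1 - s) * c)) n.
rewrite meanD mean_cst; last by near: n; exists 1%N.
rewrite (meanZ (c `^ (s - 1))) meanZ mulrDr; apply => i.
by rewrite -mulrDr powR_le_tangent ?(andP (x01 i)).1.
Unshelve. all: end_near.
Qed.

Lemma strongly_cesaro_powR x c r : (forall i, 0 <= x i <= 1) -> 0 <= c <= 1 ->
  0 < r -> r <= 2^-1 ->
  mean x @ \oo --> c -> mean (fun i => x i `^ r) @ \oo --> c `^ r ->
  strongly_cesaro x c.
Proof.
move=> x01 /andP[c0 c1] r0 rh hx hxr.
move: c0 hx hxr; rewrite le_eqVlt => /predU1P[<-|c0] hx hxr.
  rewrite /strongly_cesaro (_ : (fun i => _) = x) //.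
  by apply/funext => i; rewrite subr0 ger0_norm ?(andP (x01 i)).1.
have u01 i : 0 <= x i `^ r <= 1 by rewrite powR_ge0 powR_le1.
have t01 : 0 <= c `^ r <= 1 by rewrite powR_ge0 powR_le1 // ltW.
have rinv0 : 0 < r^-1 by rewrite invr_gt0.
have powRK y : 0 <= y -> (y `^ r) `^ r^-1 = y.
  by move=> y0; rewrite -powRrM mulfV ?gt_eqF // powRr1.
(* recover x_i from x_i ^ r through the continuous map y |-> y ^ (1/r) *)
rewrite /strongly_cesaro.
have -> : (fun i => `|x i - c|) = (fun i => `|(x i `^ r) `^ r^-1 - c|).
  by apply/funext => i; rewrite powRK ?(andP (x01 i)).1.
have -> : (0 : R) = `|(c `^ r) `^ r^-1 - c| by rewrite (powRK _ (ltW c0)) subrr normr0.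
apply: (@strongly_cesaro_comp _ _ (fun y => `|y `^ r^-1 - c|) _ u01).
  move=> e e0; have [M [M0 HM]] := powR_modulus rinv0 t01 e0.
  exists M; split => // y y01; have := HM y y01.
  by rewrite (powRK _ (ltW c0)) subrr normr0 subr0 normr_id.
exact: strongly_cesaro_sqr (mean_sqr_powR_dev_cvg0 x01 c0 r0 rh hx hxr).
Qed.

End powR_mean.

(** * Visit counts and the mean ergodic theorem for sets *)

Section probability_real.
Context d (X : measurableType d) (R : realType) (mu : probability X R).
Implicit Types A B : set X.

Lemma prE A : measurable A -> mu A = (pr mu A)%:E.
Proof. by move=> mA; rewrite fineK // fin_num_measure. Qed.

Lemma pr_ge0 A : 0 <= pr mu A.
Proof. by rewrite fine_ge0. Qed.

Lemma pr_le1 A : measurable A -> pr mu A <= 1.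
Proof. by move=> mA; rewrite -lee_fin -prE // probability_le1. Qed.

Lemma prT : pr mu setT = 1.
Proof. by rewrite probability_setT. Qed.

Lemma le_pr A B : measurable A -> measurable B -> A `<=` B -> pr mu A <= pr mu B.
Proof. by move=> mA mB AB; rewrite -lee_fin -!prE // le_measure // inE. Qed.

Lemma pr_setD A B : measurable A -> measurable B ->
  pr mu (A `\` B) = pr mu A - pr mu (A `&` B).
Proof.
move=> mA mB; rewrite measureD //; last by rewrite (le_lt_trans (probability_le1 mu mA)) ?ltry.
by rewrite fineB ?fin_num_measure //; apply: measurableI.
Qed.

Lemma pr_setC A : measurable A -> pr mu (~` A) = 1 - pr mu A.
Proof. by move=> mA; rewrite -setTD pr_setD // setTI prT. Qed.

Lemma pr_cvg_bigcup (F : (set X)^nat) : (forall i, measurable (F i)) ->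
  nondecreasing_seq F -> (fun n => pr mu (F n)) @ \oo --> pr mu (\bigcup_n F n).
Proof.
move=> mF ndF; have mU := bigcupT_measurable _ mF.
have : mu \o F @ \oo --> (pr mu (\bigcup_n F n))%:E.
  by rewrite -prE //; apply: nondecreasing_cvg_mu.
by case/fine_cvgP.
Qed.

Lemma pr_cvg_bigcap (F : (set X)^nat) : (forall i, measurable (F i)) ->
  nonincreasing_seq F -> (fun n => pr mu (F n)) @ \oo --> pr mu (\bigcap_n F n).
Proof.
move=> mF niF; have mI := bigcapT_measurable mF.
have F0 : (mu (F 0%N) < +oo)%E by rewrite (le_lt_trans (probability_le1 mu (mF 0%N))) ?ltry.
have : mu \o F @ \oo --> (pr mu (\bigcap_n F n))%:E.
  by rewrite -prE //; apply: nonincreasing_cvg_mu.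
by case/fine_cvgP.
Qed.

Lemma pr_setI_setD Y A B : measurable Y -> measurable A -> measurable B -> A `<=` B ->
  pr mu (Y `&` (B `\` A)) = pr mu (Y `&` B) - pr mu (Y `&` A).
Proof.
move=> mY mA mB AB; rewrite setIDA pr_setD //; last exact: measurableI.
by rewrite -setIA (setIidr AB).
Qed.

Lemma pr_setI_diff_le Y U V : measurable Y -> measurable U -> measurable V -> V `<=` U ->
  0 <= pr mu (Y `&` U) - pr mu (Y `&` V) <= pr mu U - pr mu V.
Proof.
move=> mY mU mV VU; have mUV : measurable (U `\` V) by apply: measurableD.
have -> : pr mu U - pr mu V = pr mu (setT `&` (U `\` V)) by rewrite pr_setI_setD ?setTI.
rewrite -pr_setI_setD // pr_ge0 le_pr //; try by apply: measurableI.
by apply: setSI.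
Qed.

Lemma measurable_indic_sum (I : Type) (s : seq I) (w : I -> R) (A : I -> set X) :
  (forall i, measurable (A i)) ->
  measurable_fun setT (fun x => \sum_(i <- s) w i * \1_(A i) x).
Proof.
move=> mA; apply: measurable_sum => i.
by apply: measurable_funM; [apply: measurable_cst | apply: measurable_indic].
Qed.

Lemma integral_indic_sum (I : Type) (s : seq I) (w : I -> R) (A : I -> set X) :
  (forall i, 0 <= w i) -> (forall i, measurable (A i)) ->
  (\int[mu]_x (\sum_(i <- s) w i * \1_(A i) x)%:E =
   (\sum_(i <- s) w i * pr mu (A i))%:E)%E.
Proof.
move=> w0 mA; under eq_fun do rewrite -sumEFin.
rewrite ge0_integral_sum //; first last.
- by move=> i x _; rewrite lee_fin mulr_ge0.
- move=> i; apply/measurable_EFinP.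
  by apply: measurable_funM; [apply: measurable_cst | apply: measurable_indic].
rewrite -sumEFin; apply: eq_bigr => i _.
under eq_fun do rewrite EFinM.
rewrite ge0_integralZl ?lee_fin //; last by apply/measurable_EFinP; apply: measurable_indic.
by rewrite integral_indic // setIT EFinM -prE.
Qed.

End probability_real.

Section birkhoff_visits.
Context d (X : measurableType d) (R : realType) (mu : probability X R) (S : X -> X).
Hypothesis mpS : measure_preserving mu S.
Implicit Types (A B C : set X) (t : R).

Lemma measurable_iter n : measurable_fun setT (iter n S).
Proof.
elim: n => [|n IH] /=; first exact: measurable_id.
exact: measurableT_comp mpS.1 IH.
Qed.

Lemma measurable_iter_preimage n A : measurable A -> measurable (iter n S @^-1` A).
Proof. by move=> mA; rewrite -[X in measurable X]setTI; apply: measurable_iter. Qed.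

Lemma measure_iter_preimage n A : measurable A -> mu (iter n S @^-1` A) = mu A.
Proof.
elim: n A => [|n IH] A mA //=.
rewrite (_ : (fun x => S (iter n S x)) @^-1` A = iter n S @^-1` (S @^-1` A)) //.
by rewrite IH ?mpS.2 // -[X in measurable X]setTI; apply: mpS.1.
Qed.

Definition visits C n x : R := \sum_(i < n) \1_C (iter i S x).

Lemma visitsD C n m x : visits C (n + m) x = visits C n x + visits C m (iter n S x).
Proof.
rewrite /visits big_split_ord /=; congr (_ + _); apply: eq_bigr => i _.
by rewrite addnC iterD.
Qed.

Lemma visitsS C n x : visits C n.+1 x = \1_C x + visits C n (S x).
Proof. by rewrite -add1n visitsD /visits big_ord1. Qed.

Lemma visits_ge0 C n x : 0 <= visits C n x.
Proof. by rewrite /visits sumr_ge0. Qed.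

Lemma visits_le C n x : visits C n x <= n%:R.
Proof.
rewrite -[n in leRHS]card_ord -sumr_const; apply: ler_sum => i _.
by rewrite indicE; case: (_ \in _).
Qed.

Lemma measurable_visits C n : measurable C -> measurable_fun setT (visits C n).
Proof.
move=> mC; apply: measurable_sum => i.
by apply: measurableT_comp; [apply: measurable_indic | apply: measurable_iter].
Qed.

Lemma integral_indic_visits B C n : measurable B -> measurable C ->
  (\int[mu]_x (\1_B x * visits C n x)%:E =
   (\sum_(i < n) pr mu (B `&` iter i S @^-1` C))%:E)%E.
Proof.
move=> mB mC.
have -> : (fun x => (\1_B x * visits C n x)%:E) =
    (fun x => (\sum_(i < n) 1 * \1_(B `&` iter i S @^-1` C) x)%:E).
  apply/funext => x; rewrite /visits mulr_sumr; congr (_%:E).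
  by apply: eq_bigr => i _; rewrite indicI mul1r.
rewrite integral_indic_sum => [|//|i]; first by under eq_bigr do rewrite mul1r.
by apply: measurableI => //; apply: measurable_iter_preimage.
Qed.

Lemma integral_visits C n : measurable C ->
  (\int[mu]_x (visits C n x)%:E = (n%:R * pr mu C)%:E)%E.
Proof.
move=> mC.
have -> : (fun x => (visits C n x)%:E) = (fun x => (\1_setT x * visits C n x)%:E).
  by apply/funext => x; rewrite indicE in_setT mul1r.
rewrite integral_indic_visits //; congr (_%:E).
under eq_bigr do rewrite setTI measure_iter_preimage //.
by rewrite sumr_const card_ord mulr_natl.
Qed.

Lemma measurable_visits_le C n a : measurable C -> measurable [set x | visits C n x <= a].
Proof.
move=> mC; rewrite -[X in measurable X]setTI.
exact: measurable_fun_le (measurable_visits n mC) (measurable_cst a).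
Qed.

Definition meet_pr B C i : R := pr mu (B `&` iter i S @^-1` C).

Lemma meet_pr01 B C i : measurable B -> measurable C -> 0 <= meet_pr B C i <= 1.
Proof.
move=> mB mC; rewrite /meet_pr pr_ge0 pr_le1 //.
by apply: measurableI => //; apply: measurable_iter_preimage.
Qed.

Definition low_freq C t N :=
  [set x | forall n, (0 < n)%N -> (n <= N)%N -> visits C n x <= n%:R * t].

Lemma measurable_low_freq C t N : measurable C -> measurable (low_freq C t N).
Proof.
move=> mC; rewrite (_ : low_freq C t N = \bigcap_n
    (if (0 < n <= N)%N then [set x | visits C n x <= n%:R * t] else setT)).
  apply: bigcapT_measurable => n.
  by case: ifP => _; [apply: measurable_visits_le | apply: measurableT].
apply/seteqP; split => x /= h n; first by move=> _; case: ifP => // /andP[]; apply: h.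
by move=> n0 nN; have := h n I; rewrite n0 nN.
Qed.

Lemma low_freq_nonincreasing C t : nonincreasing_seq (low_freq C t).
Proof.
move=> N M NM; apply/subsetPset => x h n n0 nM.
by apply: h => //; apply: leq_trans nM NM.
Qed.

(* Split the orbit segment greedily: a point outside [low_freq C t N] starts a block
   of length at most [N] in which the frequency of [C] exceeds [t], while a point
   inside contributes a visit to [low_freq C t N] itself. *)
Lemma low_freq_cover C t N L x : 0 <= t <= 1 ->
  (L%:R - N%:R) * t <= visits C L x + visits (low_freq C t N) L x.
Proof.
case/andP=> t0 t1; elim/ltn_ind: L x => L IH x.
have g1 := visits_ge0 C L x; have g2 := visits_ge0 (low_freq C t N) L x.
have [LN|NL] := leqP L N.
  have LNr : (L%:R : R) <= N%:R by rewrite ler_nat.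
  nra.
have L0 : (0 < L)%N := leq_ltn_trans (leq0n N) NL.
have [xE|xE] := pselect (low_freq C t N x).
  case: L IH NL L0 g1 g2 => [//|L] IH _ _ _ _.
  have := IH L (ltnSn L) (S x).
  rewrite !visitsS -natr1 [\1_(low_freq _ _ _) x]indicE mem_set //.
  have : 0 <= \1_C x :> R by rewrite indicE.
  rewrite /=; nra.
have [n [n0 nN hn]] : exists n, [/\ (0 < n)%N, (n <= N)%N & n%:R * t < visits C n x].
  apply: contra_notP xE => hne n n0 nN; rewrite leNgt; apply/negP => hlt.
  by apply: hne; exists n.
have nL : (n <= L)%N := leq_trans nN (ltnW NL).
rewrite -(subnKC nL) !visitsD natrD.
have lt_Ln : (L - n < L)%N by rewrite ltn_subrL n0 L0.
have := IH _ lt_Ln (iter n S x).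
have := visits_ge0 (low_freq C t N) n x.
nra.
Qed.

Lemma le_pr_low_freq C t N : measurable C -> 0 <= t <= 1 ->
  t <= pr mu C + pr mu (low_freq C t N).
Proof.
move=> mC t01; set m := pr mu C + pr mu (low_freq C t N).
have mE := measurable_low_freq t N mC.
have integrated_cover L : (N <= L)%N -> (L%:R - N%:R) * t <= L%:R * m.
  move=> NL; rewrite -lee_fin /m mulrDr EFinD -!integral_visits //.
  rewrite -ge0_integralD //; last 4 first.
  - by move=> x _; rewrite lee_fin visits_ge0.
  - by apply/measurable_EFinP; apply: measurable_visits.
  - by move=> x _; rewrite lee_fin visits_ge0.
  - by apply/measurable_EFinP; apply: measurable_visits.
  rewrite -[X in (X <= _)%E]mule1 -(probability_setT mu) -integral_cst //.
  apply: ge0_le_integral => //.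
  - by move=> x _; rewrite lee_fin mulr_ge0 ?subr_ge0 ?ler_nat ?(andP t01).1.
  - by apply: emeasurable_funD; apply/measurable_EFinP; apply: measurable_visits.
  - by move=> x _; rewrite /= -EFinD lee_fin low_freq_cover.
rewrite leNgt; apply/negP => mt; have tm : 0 < t - m by rewrite subr_gt0.
have [L0 _ /(_ _ (leqnn _)) hL0] := nbhs_infty_ger (N%:R * t / (t - m) + 1).
set L := maxn N L0.
have : N%:R * t / (t - m) < L%:R.
  by apply: lt_le_trans (le_trans hL0 _); rewrite ?ltrDl ?ler_nat ?leq_maxr.
rewrite ltr_pdivrMr // => hL.
have := integrated_cover L (leq_maxl N L0).
nra.
Qed.

Lemma le_pr_of_null_low_freq C t : measurable C -> 0 <= t <= 1 ->
  mu (\bigcap_N low_freq C t N) = 0%E -> t <= pr mu C.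
Proof.
move=> mC t01 null; apply/ler_addgt0Pr => e e0.
have := @pr_cvg_bigcap _ _ _ mu _ (fun N => measurable_low_freq t N mC)
  (@low_freq_nonincreasing C t).
move=> /cvgn_distP /(_ e e0) [N HN].
have := HN N (leqnn N); rewrite null /= subr0 ger0_norm ?pr_ge0 //.
have := le_pr_low_freq N mC t01.
lra.
Qed.

Definition unbounded_excess C t :=
  [set x | forall M : nat, exists n, M%:R <= visits C n x - n%:R * t].

Lemma measurable_unbounded_excess C t : measurable C -> measurable (unbounded_excess C t).
Proof.
move=> mC; rewrite (_ : unbounded_excess C t = \bigcap_M \bigcup_n
    [set x | M%:R <= visits C n x - n%:R * t]).
  apply: bigcapT_measurable => M; apply: bigcupT_measurable => n.
  rewrite -[X in measurable X]setTI; apply: measurable_fun_le => //.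
  exact: measurable_funB (measurable_visits n mC) (measurable_cst _).
apply/seteqP; split => x /= h M; first by move=> _; have [n hn] := h M; exists n.
by have [n _ hn] := h M I; exists n.
Qed.

Lemma unbounded_excess_invariant C t :
  S @^-1` unbounded_excess C t = unbounded_excess C t.
Proof.
have b x : `|t - \1_C x| <= `|t| + 1.
  apply: le_trans (ler_normB _ _) _; rewrite lerD2l indicE.
  by case: (_ \in _); rewrite ?normr1 ?normr0.
have shift x n : visits C n (S x) - n%:R * t = visits C n.+1 x - n.+1%:R * t + (t - \1_C x).
  by rewrite visitsS -natr1; ring.
apply/seteqP; split => x /= h M.
all: have [M' _ /(_ _ (leqnn _)) hM'] := nbhs_infty_ger (M%:R + `|t| + 1).
all: have [n hn] := h M'.
  exists n.+1; have := shift x n; have := b x; have := ler_norm (t - \1_C x).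
  lra.
case: n hn => [|n] hn.
  move: hn; rewrite /visits big_ord0 mul0r subr0.
  by have := normr_ge0 t; have := ler0n R M; lra.
exists n; have := shift x n; have := b x; have := ler_norm (- (t - \1_C x)).
rewrite normrN; lra.
Qed.

Lemma bigcap_low_freq_subsetC C t :
  \bigcap_N low_freq C t N `<=` ~` unbounded_excess C t.
Proof.
move=> x hE /(_ 1%N) [[|n] hn].
  by move: hn; rewrite /visits big_ord0 mul0r subr0; lra.
by have := hE n.+1 I n.+1 (ltn0Sn n) (leqnn _); lra.
Qed.

Definition late_excess C a M := [set x | exists2 n, (M <= n)%N & n%:R * a < visits C n x].

Lemma measurable_late_excess C a M : measurable C -> measurable (late_excess C a M).
Proof.
move=> mC; rewrite (_ : late_excess C a M = \bigcup_n
    (if (M <= n)%N then ~` [set x | visits C n x <= n%:R * a] else set0)).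
  apply: bigcupT_measurable => n; case: ifP => _ //.
  by apply: measurableC; apply: measurable_visits_le.
apply/seteqP; split => x /=.
  by case=> n Mn hn; exists n => //; rewrite Mn /=; apply/negP; rewrite -ltNge.
by case=> n _; case: ifP => // Mn /negP; rewrite -ltNge; exists n.
Qed.

Lemma late_excess_nonincreasing C a : nonincreasing_seq (late_excess C a).
Proof.
move=> M M' MM'; apply/subsetPset => x [n M'n hn].
by exists n => //; apply: leq_trans M'n.
Qed.

Lemma bigcap_late_excess_subset C c e : 0 < e ->
  \bigcap_M late_excess C (c + e) M `<=` unbounded_excess C (c + e / 2).
Proof.
move=> e0 x hx M'.
have [M _ /(_ _ (leqnn _)) hM] := nbhs_infty_ger (2 * M'%:R / e).
have [n Mn hn] := hx M I; exists n.
have : (M%:R : R) <= n%:R by rewrite ler_nat.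
have : M'%:R <= M%:R * e / 2.
  by have := ler_wpM2r (ltW e0) hM; rewrite divfK ?gt_eqF //; lra.
have := ler0n R M'.
nra.
Qed.

Lemma indic_mul_visits_le B C a M n x : 0 <= a -> (M <= n)%N ->
  \1_B x * visits C n x <= n%:R * a * \1_B x + n%:R * \1_(late_excess C a M) x.
Proof.
move=> a0 Mn; rewrite !indicE.
have [xB|_] := boolP (x \in B); last by rewrite mul0r mulr0 add0r mulr_ge0.
rewrite mul1r mulr1; have [_|xE] := boolP (x \in late_excess C a M).
  by rewrite mulr1 -[visits _ _ _]add0r lerD ?mulr_ge0 ?visits_le.
rewrite mulr0 addr0 leNgt; apply: contraNN xE => hlt.
by rewrite mem_set //; exists n.
Qed.

Section ergodic_visits.
Hypothesis ergS : ergodic mu S.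

Lemma null_unbounded_excess C t : measurable C -> pr mu C < t ->
  mu (unbounded_excess C t) = 0%E.
Proof.
move=> mC Ct; have mG := measurable_unbounded_excess t mC.
have [t1|t1] := leP t 1; last first.
  rewrite (_ : unbounded_excess C t = set0) ?measure0 //.
  apply/seteqP; split => // x /(_ 1%N) [n].
  by have := visits_le C n x; have := ler0n R n; nra.
case: (ergS mG (unbounded_excess_invariant C t)) => // G1; exfalso.
have mE : measurable (\bigcap_N low_freq C t N).
  by apply: bigcapT_measurable => N; apply: measurable_low_freq.
have nullC : mu (~` unbounded_excess C t) = 0%E.
  by rewrite (prE mu (measurableC mG)) pr_setC // G1 /= subrr.
have null : mu (\bigcap_N low_freq C t N) = 0%E.
  exact: subset_measure0 mE (measurableC mG) (@bigcap_low_freq_subsetC C t) nullC.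
have t0 : 0 <= t by apply: le_trans (ltW Ct); apply: pr_ge0.
by have := le_pr_of_null_low_freq mC _ null; rewrite t0 t1 => /(_ isT); lra.
Qed.

Lemma pr_late_excess_small C e : measurable C -> 0 < e ->
  exists M, pr mu (late_excess C (pr mu C + e) M) <= e.
Proof.
move=> mC e0.
have mL M := measurable_late_excess (pr mu C + e) M mC.
have null0 : mu (unbounded_excess C (pr mu C + e / 2)) = 0%E.
  by apply: null_unbounded_excess; rewrite ?ltrDl ?divr_gt0.
have null : mu (\bigcap_M late_excess C (pr mu C + e) M) = 0%E.
  exact: subset_measure0 (bigcapT_measurable mL) (measurable_unbounded_excess _ mC)
    (@bigcap_late_excess_subset C (pr mu C) e e0) null0.
have := @pr_cvg_bigcap _ _ _ mu _ mL (@late_excess_nonincreasing C _).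
move=> /cvgn_distP /(_ e e0) [M HM].
by exists M; have := HM M (leqnn M); rewrite null /= subr0 ger0_norm ?pr_ge0.
Qed.

Lemma avg_le_near B C e : measurable B -> measurable C -> 0 < e ->
  \forall n \near \oo, avg mu S B C n <= (pr mu C + e) * pr mu B + e.
Proof.
move=> mB mC e0; have [M HM] := pr_late_excess_small mC e0.
set a := pr mu C + e; set E := late_excess C a M.
have a0 : 0 <= a by rewrite addr_ge0 ?pr_ge0 ?ltW.
have mE : measurable E by apply: measurable_late_excess.
near=> n; have n0 : (0 < n)%N by near: n; exists 1%N.
have Mn : (M <= n)%N by near: n; exists M.
have sum_le : \sum_(i < n) pr mu (B `&` iter i S @^-1` C) <=
    n%:R * a * pr mu B + n%:R * pr mu E.
  rewrite (_ : _ + _ = \sum_(b <- [:: true; false])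
      (if b then n%:R * a else n%:R) * pr mu (if b then B else E)); last first.
    by rewrite !big_cons big_nil addr0.
  rewrite -lee_fin -integral_indic_visits // -integral_indic_sum; first last.
  - by case.
  - by case; rewrite ?mulr_ge0.
  apply: ge0_le_integral => //.
  - by move=> x _; rewrite lee_fin mulr_ge0 ?visits_ge0 // indicE.
  - apply/measurable_EFinP; apply: measurable_funM; first exact: measurable_indic.
    exact: measurable_visits.
  - by apply/measurable_EFinP; apply: measurable_indic_sum; case.
  - move=> x _; rewrite lee_fin !big_cons big_nil addr0 /=.
    exact: indic_mul_visits_le.
have nR : (0 : R) < n%:R by rewrite ltr0n.
rewrite /avg -(ler_pM2l nR) mulrA mulfV ?gt_eqF // mul1r.
apply: le_trans sum_le _.
by rewrite [leRHS]mulrDr [in leRHS]mulrA lerD2l ler_wpM2l.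
Unshelve. all: end_near.
Qed.

Lemma ergodic_avg_cvg B C : measurable B -> measurable C ->
  avg mu S B C @ \oo --> pr mu B * pr mu C.
Proof.
move=> mB mC; apply/cvgn_distP => e e0; have e2 : 0 < e / 2 by rewrite divr_gt0.
have [N1 _ H1] := avg_le_near mB mC e2.
have [N2 _ H2] := avg_le_near mB (measurableC mC) e2.
exists (maxn (maxn N1 N2) 1) => n; rewrite !geq_max => /andP[/andP[n1 n2] n0].
have := H1 n n1; have := H2 n n2.
rewrite (_ : avg mu S B (~` C) n = pr mu B - avg mu S B C n); last first.
  rewrite /avg -[pr mu B](mean_cst _ n0) /mean -mulrBr -sumrB; congr (_ * _).
  apply: eq_bigr => i _; rewrite preimage_setC -setDE pr_setD //.
  exact: measurable_iter_preimage.
rewrite pr_setC //.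
have := pr_ge0 mu B; have := pr_le1 mu mB; have := pr_ge0 mu C; have := pr_le1 mu mC.
move=> *; rewrite ler_norml; apply/andP; split; nra.
Qed.

End ergodic_visits.

End birkhoff_visits.

(** * The product system *)

Section product_induction.
Context d1 d2 (T1 : measurableType d1) (T2 : measurableType d2) (R : realType).
Implicit Types E : set (T1 * T2).

Lemma measurable_prod_ind (Q : set (T1 * T2) -> Prop) :
  (forall A B, measurable A -> measurable B -> Q (A `*` B)) ->
  (forall E F, measurable E -> measurable F -> E `<=` F -> Q E -> Q F -> Q (F `\` E)) ->
  (forall F : (set (T1 * T2))^nat, (forall i, measurable (F i)) -> nondecreasing_seq F ->
     (forall i, Q (F i)) -> Q (\bigcup_i F i)) ->
  forall E, measurable E -> Q E.
Proof.
move=> Qrect QD QU.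
set G := [set A `*` B | A in @measurable _ T1 & B in @measurable _ T2].
have GI : setI_closed G.
  move=> _ _ [A1 mA1 [B1 mB1 <-]] [A2 mA2 [B2 mB2 <-]]; rewrite -setXI.
  by exists (A1 `&` A2); [apply: measurableI | exists (B1 `&` B2) => //; apply: measurableI].
have lam : lambda_system setT [set E | measurable E /\ Q E].
  split => //.
  - by split => //; rewrite -setXTT; apply: Qrect.
  - by move=> E F FE [mE QE] [mF QF]; split; [apply: measurableD | apply: QD].
  - move=> F ndF QF; split; first by apply: bigcupT_measurable => i; case: (QF i).
    by apply: QU => // i; case: (QF i).
have GQ : G `<=` [set E | measurable E /\ Q E].
  by move=> _ [A mA [B mB <-]]; split; [apply: measurableX | apply: Qrect].
move=> E; rewrite measurable_prod_measurableType => /(lambda_system_subset GI lam GQ).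
by case=> // F _; apply: subsetT.
Qed.

Lemma prod_measurable_cvg (mu : probability (T1 * T2)%type R) (phi : set (T1 * T2) -> R^nat)
    (k : R) : `|k| <= 1 ->
  (forall E F, measurable E -> measurable F -> E `<=` F ->
     phi (F `\` E) = fun n => phi F n - phi E n) ->
  (forall E F, measurable E -> measurable F -> E `<=` F ->
     forall n, `|phi F n - phi E n| <= pr mu F - pr mu E) ->
  (forall A B, measurable A -> measurable B -> phi (A `*` B) @ \oo --> pr mu (A `*` B) * k) ->
  forall E, measurable E -> phi E @ \oo --> pr mu E * k.
Proof.
move=> k1 phiD phi_lip phi_rect.
apply: (measurable_prod_ind (Q := fun E => phi E @ \oo --> pr mu E * k)) => //.
  move=> E F mE mF EF hE hF /=.
  by rewrite phiD // pr_setD // (setIidr EF) mulrBl; apply: cvgB.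
move=> F mF ndF hF /=; have mU : measurable (\bigcup_i F i) by apply: bigcupT_measurable.
apply: cvg_unif_approx => e e0.
have := @pr_cvg_bigcup _ _ _ mu _ mF ndF.
move=> /cvgn_distP /(_ e e0) [j /(_ j (leqnn j))].
have FjU : F j `<=` \bigcup_i F i by move=> x Fx; exists j.
have := le_pr mu (mF j) mU FjU; rewrite -subr_ge0 distrC => hd.
rewrite ger0_norm // => hj.
exists (phi (F j)), (pr mu (F j) * k); split; first exact: hF.
  by rewrite -mulrBl normrM distrC (ger0_norm hd) -[leRHS]mulr1 ler_pM.
by move=> n; apply: le_trans (phi_lip _ _ (mF j) mU FjU n) hj.
Qed.

End product_induction.

Section product_system.
Context d (O : measurableType d) (R : realType) (P : probability O R) (T : O -> O).
Hypothesis mpT : measure_preserving P T.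
Implicit Types A B C D : set O.

Let PP : probability (O * O)%type R := (P \x P)%E.
Let TT (xy : O * O) := (T xy.1, T xy.2).

Let measurable_TT : measurable_fun setT TT.
Proof.
by apply: measurable_fun_pair; apply: measurableT_comp mpT.1 _;
  [apply: measurable_fst | apply: measurable_snd].
Qed.

Let iter_TT n xy : iter n TT xy = (iter n T xy.1, iter n T xy.2).
Proof. by elim: n => [|n IH] /=; [case: xy | rewrite IH]. Qed.

Let setX_iter_preimage n A B C D :
  (A `*` B) `&` iter n TT @^-1` (C `*` D) =
  (A `&` iter n T @^-1` C) `*` (B `&` iter n T @^-1` D).
Proof.
apply/seteqP; split => -[x y]; rewrite /preimage /= iter_TT /=.
  by case=> -[? ?] [? ?].
by case=> -[? ?] [? ?].
Qed.

Let pr_setX A B : measurable A -> measurable B -> pr PP (A `*` B) = pr P A * pr P B.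
Proof. by move=> mA mB; rewrite /= product_measure1E // fineM // fin_num_measure. Qed.

Lemma measure_preserving_prod : measure_preserving PP TT.
Proof.
split => // E mE; have mTT F : measurable F -> measurable (TT @^-1` F).
  by move=> mF; rewrite -[X in measurable X]setTI; apply: measurable_TT.
rewrite (prE PP (mTT _ mE)) (prE PP mE); congr (_%:E).
move: E mE; apply: (measurable_prod_ind (Q := fun E => pr PP (TT @^-1` E) = pr PP E)).
- move=> A B mA mB /=; rewrite (_ : TT @^-1` _ = T @^-1` A `*` T @^-1` B) //.
  have mT F : measurable F -> measurable (T @^-1` F).
    by move=> mF; rewrite -[X in measurable X]setTI; apply: mpT.1.
  have pr_preimage F : measurable F -> pr P (T @^-1` F) = pr P F :=
    fun mF => congr1 fine (mpT.2 _ mF).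
  have mTA := mT _ mA; have mTB := mT _ mB.
  by rewrite !pr_setX //; congr (_ * _); apply: pr_preimage.
- move=> E F mE mF EF /= hE hF.
  rewrite (_ : TT @^-1` (F `\` E) = TT @^-1` F `\` TT @^-1` E) //.
  have mTE := mTT _ mE; have mTF := mTT _ mF.
  rewrite !pr_setD // !setIidr //; [by rewrite hE hF | exact: preimage_subset].
- move=> F mF ndF /= hF; have mTF i := mTT _ (mF i).
  have ndTF : nondecreasing_seq (fun n => TT @^-1` F n).
    by move=> n m nm; apply/subsetPset; apply: preimage_subset; apply/subsetPset/ndF.
  have := @pr_cvg_bigcup _ _ _ PP _ mTF ndTF; under eq_fun do rewrite hF.
  move=> /cvg_unique; apply; first exact: Rhausdorff.
  exact: pr_cvg_bigcup.
Qed.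

Let avg_setX A B C D : measurable A -> measurable B -> measurable C -> measurable D ->
  avg PP TT (A `*` B) (C `*` D) = mean (fun i => meet_pr P T A C i * meet_pr P T B D i).
Proof.
move=> mA mB mC mD; apply/funext => n; rewrite /avg /mean; congr (_ * _).
apply: eq_bigr => i _; rewrite setX_iter_preimage pr_setX //.
all: by apply: measurableI => //; apply: (measurable_iter_preimage mpT).
Qed.

Lemma weakly_mixing_ergodic : weakly_mixing P T -> ergodic P T.
Proof.
move=> wm A mA TA; have mAT : measurable (A `*` [set: O]) by apply: measurableX.
have : TT @^-1` (A `*` setT) = A `*` setT by rewrite -[in RHS]TA.
have PAT : (P A * P [set: O])%E = P A.
  by rewrite -[RHS]mule1; congr (_ * _)%E; apply: probability_setT.
by move=> /(wm _ mAT); rewrite /= product_measure1E // PAT.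
Qed.

Section weakly_mixing_density.
Hypothesis wm : weakly_mixing P T.

Lemma weakly_mixing_strongly_cesaro B C : measurable B -> measurable C ->
  strongly_cesaro (meet_pr P T B C) (pr P B * pr P C).
Proof.
move=> mB mC; apply: strongly_cesaro_sqr; apply: mean_sqr_dev_cvg0.
  exact: (ergodic_avg_cvg mpT (weakly_mixing_ergodic wm)).
rewrite (_ : (fun i => _ ^+ 2) = fun i => meet_pr P T B C i * meet_pr P T B C i).
  2: by apply/funext => i; rewrite expr2.
have := ergodic_avg_cvg measure_preserving_prod wm (measurableX mB mB) (measurableX mC mC).
by rewrite avg_setX // !pr_setX // (_ : _ * _ = (pr P B * pr P C) ^+ 2) //; ring.
Qed.

End weakly_mixing_density.

Section density_weakly_mixing.
Hypothesis dens : forall B C, measurable B -> measurable C ->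
  strongly_cesaro (meet_pr P T B C) (pr P B * pr P C).

Let avg_cvg_setX A B C D : measurable A -> measurable B -> measurable C -> measurable D ->
  avg PP TT (A `*` B) (C `*` D) @ \oo --> pr PP (A `*` B) * pr PP (C `*` D).
Proof.
move=> mA mB mC mD; rewrite avg_setX // !pr_setX //.
rewrite (_ : _ * _ = (pr P A * pr P C) * (pr P B * pr P D)); last by ring.
apply: strongly_cesaro_mul (dens mA mC) (dens mB mD).
  by move=> i; have /andP[? ?] := meet_pr01 mpT i mB mD; rewrite ger0_norm.
have := pr_le1 P mA; have := pr_le1 P mC; have := pr_ge0 P A; have := pr_ge0 P C.
by move=> *; rewrite ger0_norm ?mulr_ge0 // -[leRHS]mulr1 ler_pM.
Qed.

Let mpTT := measure_preserving_prod.

Let norm_pr_le1 E : measurable E -> `|pr PP E| <= 1.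
Proof. by move=> mE; rewrite ger0_norm ?pr_ge0 ?pr_le1. Qed.

Let avg_setD_left E F G : measurable E -> measurable F -> measurable G -> E `<=` F ->
  avg PP TT (F `\` E) G = fun n => avg PP TT F G n - avg PP TT E G n.
Proof.
move=> mE mF mG EF; apply/funext => n; rewrite /avg -mulrBr -sumrB; congr (_ * _).
apply: eq_bigr => i _; rewrite ![_ `&` iter i TT @^-1` G]setIC pr_setI_setD //.
exact: (measurable_iter_preimage mpTT).
Qed.

Let avg_setD_right E F G : measurable E -> measurable F -> measurable G -> E `<=` F ->
  avg PP TT G (F `\` E) = fun n => avg PP TT G F n - avg PP TT G E n.
Proof.
move=> mE mF mG EF; apply/funext => n; rewrite /avg -mulrBr -sumrB; congr (_ * _).
apply: eq_bigr => i _; rewrite (_ : iter i TT @^-1` (F `\` E) =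
  iter i TT @^-1` F `\` iter i TT @^-1` E) // pr_setI_setD //.
- exact: (measurable_iter_preimage mpTT).
- exact: (measurable_iter_preimage mpTT).
- exact: preimage_subset.
Qed.

Let avg_lip_left E F G n : measurable E -> measurable F -> measurable G -> E `<=` F ->
  `|avg PP TT F G n - avg PP TT E G n| <= pr PP F - pr PP E.
Proof.
move=> mE mF mG EF; rewrite /avg -mulrBr -sumrB.
apply: (@norm_mean_le _ (fun i => pr PP (F `&` iter i TT @^-1` G) -
  pr PP (E `&` iter i TT @^-1` G))); first by rewrite subr_ge0 le_pr.
move=> i; rewrite ![_ `&` iter i TT @^-1` G]setIC.
have /andP[h0 h1] := pr_setI_diff_le PP (measurable_iter_preimage mpTT i mG) mF mE EF.
by rewrite ger0_norm.
Qed.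

Let avg_lip_right E F G n : measurable E -> measurable F -> measurable G -> E `<=` F ->
  `|avg PP TT G F n - avg PP TT G E n| <= pr PP F - pr PP E.
Proof.
move=> mE mF mG EF; rewrite /avg -mulrBr -sumrB.
apply: (@norm_mean_le _ (fun i => pr PP (G `&` iter i TT @^-1` F) -
  pr PP (G `&` iter i TT @^-1` E))); first by rewrite subr_ge0 le_pr.
move=> i; have miter := measurable_iter_preimage mpTT i.
have /andP[h0 h1] := pr_setI_diff_le PP mG (miter _ mF) (miter _ mE)
  (@preimage_subset _ _ (iter i TT) _ _ EF).
by rewrite ger0_norm // -[pr PP F](congr1 fine (measure_iter_preimage mpTT i mF))
  -[pr PP E](congr1 fine (measure_iter_preimage mpTT i mE)).
Qed.

Let avg_cvg E G : measurable E -> measurable G ->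
  avg PP TT E G @ \oo --> pr PP E * pr PP G.
Proof.
move=> mE mG; rewrite mulrC; move: G mG.
apply: (prod_measurable_cvg (phi := avg PP TT E)); first exact: norm_pr_le1.
- by move=> F G mF mG FG; apply: avg_setD_right.
- by move=> F G mF mG FG n; apply: avg_lip_right.
move=> C D mC mD; rewrite mulrC; move: E mE.
apply: (prod_measurable_cvg (phi := avg PP TT ^~ (C `*` D))).
- by apply: norm_pr_le1; apply: measurableX.
- by move=> E F mE mF EF; apply: avg_setD_left => //; apply: measurableX.
- by move=> E F mE mF EF n; apply: avg_lip_left => //; apply: measurableX.
by move=> A B mA mB; apply: avg_cvg_setX.
Qed.

Lemma strongly_cesaro_weakly_mixing : weakly_mixing P T.
Proof.
move=> E mE TE.
have iterE n : iter n TT @^-1` E = E.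
  elim: n => // n IH.
  by rewrite (_ : _ @^-1` E = iter n TT @^-1` (TT @^-1` E)) // TE IH.
have avgE : avg PP TT E E @ \oo --> pr PP E.
  apply: cvg_near_cst; near=> n.
  rewrite /avg (eq_bigr (fun=> pr PP E)) => [|i _]; last by rewrite iterE setIid.
  by rewrite -/(mean (fun=> pr PP E) n) mean_cst //; near: n; exists 1%N.
have := cvg_unique (@Rhausdorff R) (avg_cvg mE mE) avgE.
move=> sqE; have : pr PP E * (pr PP E - 1) = 0 by rewrite mulrBr mulr1 sqE subrr.
move/eqP; rewrite mulf_eq0 subr_eq0 => /orP[] /eqP prE01; rewrite (prE PP mE) prE01.
- by left.
- by right.
Unshelve. all: end_near.
Qed.

End density_weakly_mixing.

End product_system.

Section weak_mixing_characterization.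
Context d (O : measurableType d) (R : realType) (P : probability O R) (T : O -> O).
Hypothesis mpT : measure_preserving P T.

Let pr_mul01 B C : measurable B -> measurable C -> 0 <= pr P B * pr P C <= 1.
Proof.
move=> mB mC; rewrite mulr_ge0 ?pr_ge0 //= -[leRHS]mulr1.
by rewrite ler_pM ?pr_ge0 ?pr_le1.
Qed.

Lemma avg_pow1 B C : avg_pow P T 1 B C = avg P T B C.
Proof.
apply/funext => n; rewrite /avg_pow /avg; congr (_ * _).
by apply: eq_bigr => i _; rewrite powRr1 ?pr_ge0.
Qed.

Lemma weakly_mixing_avg_powR r B C : weakly_mixing P T -> 0 < r ->
  measurable B -> measurable C ->
  avg_pow P T r B C @ \oo --> (pr P B) `^ r * (pr P C) `^ r.
Proof.
move=> wm r0 mB mC; rewrite -powRM ?pr_ge0 //.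
apply: (mean_powR_cvg (fun i => meet_pr01 mpT i mB mC) (pr_mul01 mB mC) r0).
exact: weakly_mixing_strongly_cesaro.
Qed.

Lemma avg_powR_weakly_mixing :
  (forall B C, measurable B -> measurable C ->
    avg P T B C @ \oo --> pr P B * pr P C /\
    exists r : R, 0 < r /\ r <= 2^-1 /\
      avg_pow P T r B C @ \oo --> (pr P B) `^ r * (pr P C) `^ r) ->
  weakly_mixing P T.
Proof.
move=> h; apply: (strongly_cesaro_weakly_mixing mpT) => B C mB mC.
have [hav [r [r0 [rh hpow]]]] := h B C mB mC.
apply: (strongly_cesaro_powR (fun i => meet_pr01 mpT i mB mC) (pr_mul01 mB mC) r0 rh hav).
by rewrite powRM ?pr_ge0.
Qed.

End weak_mixing_characterization.

Unset Implicit Arguments.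

Theorem proposition6p3 (d : measure_display) (Omega : measurableType d)
  (R : realType) (P : probability Omega R) (T : Omega -> Omega) :
  measure_preserving P T ->
  let cond_ii :=
    forall r : R, 0 < r -> forall B C : set Omega, measurable B -> measurable C ->
      avg_pow P T r B C @ \oo --> (fine (P B)) `^ r * (fine (P C)) `^ r in
  let cond_iii :=
    forall B C : set Omega, measurable B -> measurable C ->
      avg P T B C @ \oo --> fine (P B) * fine (P C) /\
      exists r : R, 0 < r /\ r <= 2^-1 /\
        avg_pow P T r B C @ \oo --> (fine (P B)) `^ r * (fine (P C)) `^ r in
  [/\ weakly_mixing P T <-> cond_ii,
      weakly_mixing P T <-> cond_iii &
      weakly_mixing P T <->
        (ergodic P T /\
         forall B C : set Omega, measurable B -> measurable C ->
           avg_pow P T (2^-1) B C @ \oo -->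
             (fine (P B)) `^ (2^-1) * (fine (P C)) `^ (2^-1))].
Proof.
move=> mpT cond_ii cond_iii; have half_gt0 : (0 : R) < 2^-1 by rewrite invr_gt0.
have wm_ii : weakly_mixing P T -> cond_ii.
  by move=> wm r r0 B C; apply: weakly_mixing_avg_powR.
have ii_iii : cond_ii -> cond_iii.
  move=> h B C mB mC; split; last by exists 2^-1; split => //; split => //; apply: h.
  by rewrite -avg_pow1 -(powRr1 (pr_ge0 P B)) -(powRr1 (pr_ge0 P C)); apply: h.
have iii_wm : cond_iii -> weakly_mixing P T := avg_powR_weakly_mixing mpT.
split.
- by split=> [/wm_ii | /ii_iii /iii_wm].
- by split=> [/wm_ii /ii_iii | /iii_wm].
- split=> [wm | [erg h]].
    by split; [apply: weakly_mixing_ergodic | move=> B C; apply: wm_ii].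
  apply: iii_wm => B C mB mC; split; first exact: ergodic_avg_cvg.
  by exists 2^-1; split => //; split => //; apply: h.
Qed.
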